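(* Let $M\subset\mathbb{R}^2$ be closed, $z\in M$ and $u>0$. Suppose there exist sequences $(z_n)$ in $M$ and $(\rho_n)$ in $(0,\infty)$ such that $z_n\to z$ and, for each $n\in\mathbb{N}$: (i) $z_n\in(z+S^u)\setminus\{z\}$, and (ii) either $(z_n+A^{3u}_{\rho_n})\cap M=\{z_n\}$ or $(z_n-A^{3u}_{\rho_n})\cap M=\{z_n\}$. Then $M\notin\mathcal{D}_2$.
   Context: For $r>0$ and $u>0$: $A^u_r=\{(x,y):0\le x\le r,\ |y|\le ux\}$ and $S^u=\{(x,y):x\in\mathbb{R},\ |y|\le u|x|\}$. A function on an open convex set $C\subset\mathbb{R}^d$ is DC if it is the difference of two convex functions on $C$. $\mathcal{D}_2$ denotes the family consisting of $\varnothing$ together with all nonempty closed sets $A\subset\mathbb{R}^2$ whose distance function $d_A=\operatorname{dist}(\cdot,A)$ is DC on $\mathbb{R}^2$. *)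

From Stdlib Require Import Reals.
From Coquelicot Require Import Coquelicot.
Open Scope R_scope.

Definition pt := (R * R)%type.

Definition padd (p q : pt) : pt := (fst p + fst q, snd p + snd q).
Definition psub (p q : pt) : pt := (fst p - fst q, snd p - snd q).

Definition edist (p q : pt) : R :=
  sqrt ((fst p - fst q) ^ 2 + (snd p - snd q) ^ 2).

Definition Aset (u r : R) (p : pt) : Prop :=
  0 <= fst p <= r /\ Rabs (snd p) <= u * fst p.

Definition Sset (u : R) (p : pt) : Prop := Rabs (snd p) <= u * Rabs (fst p).

(* distance function d_A(x) = inf_{a in A} |x - a| (meaningful for nonempty A) *)
Definition distfun (A : pt -> Prop) (x : pt) : R :=
  real (Glb_Rbar (fun r => exists a, A a /\ r = edist x a)).

Definition convex2 (f : pt -> R) : Prop :=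
  forall (p q : pt) (t : R), 0 <= t <= 1 ->
    f (t * fst p + (1 - t) * fst q, t * snd p + (1 - t) * snd q)
    <= t * f p + (1 - t) * f q.

Definition DC2 (f : pt -> R) : Prop :=
  exists g h : pt -> R, convex2 g /\ convex2 h /\ forall x, f x = g x - h x.

Definition closed2 (A : pt -> Prop) : Prop := @closed (prod_UniformSpace R_UniformSpace R_UniformSpace) A.

Definition in_D2 (A : pt -> Prop) : Prop :=
  (forall p, ~ A p) \/
  ((exists p, A p) /\ closed2 A /\ DC2 (distfun A)).

(* Suppose d_M = g - h with g, h convex, and write z_n = z + x_n (1, m_n) with |m_n| <= u;
   let l be a cluster point of (m_n).  As one of z_n +- A^{3u}_rho meets M only in z_n, d_M
   vanishes at z_n but is at least c tau at z_n + tau (1, m_n) or at z_n - tau (1, m_n), with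
   c = min(1/2, u/2).  Convexity of h transfers this to g: its second difference at z_n along
   (1, m_n) with step tau is at least c tau.  On the line through z and z_n this makes the
   difference quotient (g(z + t w) - g(z)) / t jump by c/2 between t = |x_n| and t = 2|x_n|.
   But these quotients are nondecreasing in t and bounded below, so they settle as t -> 0+,
   and they do so uniformly for directions w near +-(1, l), because the quotient is sublinear
   in the direction and bounded on vertical directions. *)

From Stdlib Require Import Reals Lra Classical.
From Coquelicot Require Import Coquelicot.
Open Scope R_scope.

Definition pscal (k : R) (v : pt) : pt := (k * fst v, k * snd v).
Definition pmove (p v : pt) (t : R) : pt := padd p (pscal t v).

Ltac pt_field :=
  unfold pmove, padd, psub, pscal; apply injective_projections; cbn [fst snd]; field.

Lemma pmove_0 p v : pmove p v 0 = p.
Proof. pt_field. Qed.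

Lemma pmove_pmove p v s t : pmove (pmove p v s) v t = pmove p v (s + t).
Proof. pt_field. Qed.

Lemma Rdiv_le_cross a b c d : 0 < b -> 0 < d -> a * d <= c * b -> a / b <= c / d.
Proof.
  intros Hb Hd H. apply Rle_div_l; [lra|].
  replace (c / d * b) with (c * b / d) by (field; lra).
  apply Rle_div_r; lra.
Qed.

Definition convex1 (F : R -> R) : Prop :=
  forall a b l, 0 <= l <= 1 -> F (l * a + (1 - l) * b) <= l * F a + (1 - l) * F b.

Lemma convex1_chord_slopes F x y w : convex1 F -> x < y < w ->
  (F y - F x) / (y - x) <= (F w - F x) / (w - x) /\
  (F w - F x) / (w - x) <= (F w - F y) / (w - y).
Proof.
  intros HF [Hxy Hyw].
  set (l := (w - y) / (w - x)).
  assert (Hl : 0 <= l <= 1).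
  { unfold l; split; [apply Rdiv_le_0_compat | apply Rle_div_l]; lra. }
  pose proof (HF x w l Hl) as Hcvx.
  replace (l * x + (1 - l) * w) with y in Hcvx by (unfold l; field; lra).
  apply Rmult_le_compat_l with (r := w - x) in Hcvx; [|lra].
  replace ((w - x) * (l * F x + (1 - l) * F w)) with ((w - y) * F x + (y - x) * F w)
    in Hcvx by (unfold l; field; lra).
  split; apply Rdiv_le_cross; lra.
Qed.

Lemma convex1_slope_jump F c s tau : convex1 F -> 0 < tau < s ->
  c * tau <= F (s + tau) + F (s - tau) - 2 * F s ->
  c / 2 <= (F (2 * s) - F 0) / (2 * s) - (F s - F 0) / s.
Proof.
  intros HF Htau Hsec.
  destruct (convex1_chord_slopes F s (s + tau) (2 * s) HF) as [Hright _]; [lra|].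
  destruct (convex1_chord_slopes F 0 (s - tau) s HF) as [_ Hleft]; [lra|].
  assert (Hc : c <= (F (s + tau) + F (s - tau) - 2 * F s) / tau) by (apply Rle_div_r; lra).
  assert (E1 : (F (s + tau) + F (s - tau) - 2 * F s) / tau
               = (F (s + tau) - F s) / (s + tau - s) - (F s - F (s - tau)) / (s - (s - tau)))
    by (field; lra).
  assert (E2 : (F (2 * s) - F s) / (2 * s - s) - (F s - F 0) / (s - 0)
               = 2 * ((F (2 * s) - F 0) / (2 * s) - (F s - F 0) / s))
    by (field; lra).
  lra.
Qed.

Lemma near_infimum_point (f : R -> R) (lb eps : R) :
  (forall s, 0 < s <= 1 -> lb <= f s) -> 0 < eps ->
  exists s0, 0 < s0 <= 1 /\ forall s, 0 < s <= 1 -> f s0 <= f s + eps.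
Proof.
  intros Hlb Heps.
  set (E := fun y => exists s, 0 < s <= 1 /\ y = - f s).
  destruct (completeness E) as [sup [Hub Hleast]].
  { exists (- lb). intros y [s [Hs ->]]. specialize (Hlb s Hs). lra. }
  { exists (- f 1), 1. split; [lra | reflexivity]. }
  destruct (classic (exists s0, 0 < s0 <= 1 /\ sup - eps < - f s0)) as [[s0 [Hs0 Hclose]] | Hfar].
  - exists s0. split; [exact Hs0|]. intros s Hs.
    assert (- f s <= sup) by (apply Hub; exists s; auto). lra.
  - exfalso.
    assert (Hub' : is_upper_bound E (sup - eps)).
    { intros y [s [Hs ->]]. apply Rnot_lt_le. intros Hlt. apply Hfar. exists s; auto. }
    specialize (Hleast _ Hub'). lra.
Qed.

Definition d2 (f : pt -> R) (p v : pt) (t : R) : R :=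
  f (pmove p v t) + f (pmove p v (- t)) - 2 * f p.

Lemma d2_opp f p v t : d2 f p (pscal (-1) v) t = d2 f p v t.
Proof.
  unfold d2.
  replace (pmove p (pscal (-1) v) t) with (pmove p v (- t)) by pt_field.
  replace (pmove p (pscal (-1) v) (- t)) with (pmove p v t) by pt_field.
  ring.
Qed.

Section ConvexPlane.

Variable g : pt -> R.
Hypothesis g_convex : convex2 g.

Lemma convex2_line p v : convex1 (fun t => g (pmove p v t)).
Proof.
  intros a b l Hl.
  replace (pmove p v (l * a + (1 - l) * b)) with
    (l * fst (pmove p v a) + (1 - l) * fst (pmove p v b),
     l * snd (pmove p v a) + (1 - l) * snd (pmove p v b)) by pt_field.
  exact (g_convex _ _ l Hl).
Qed.

Lemma convex2_midpoint p q : g (pscal (1 / 2) (padd p q)) <= (g p + g q) / 2.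
Proof.
  replace (pscal (1 / 2) (padd p q)) with
    (1 / 2 * fst p + (1 - 1 / 2) * fst q, 1 / 2 * snd p + (1 - 1 / 2) * snd q) by pt_field.
  pose proof (g_convex p q (1 / 2) ltac:(lra)). lra.
Qed.

Lemma d2_nonneg p v t : 0 <= d2 g p v t.
Proof.
  pose proof (convex2_midpoint (pmove p v t) (pmove p v (- t))) as H.
  replace (pscal (1 / 2) (padd (pmove p v t) (pmove p v (- t)))) with p in H by pt_field.
  unfold d2. lra.
Qed.

Variable z : pt.

Definition dq (v : pt) (t : R) : R := (g (pmove z v t) - g z) / t.

Lemma dq_mono v s s' : 0 < s <= s' -> dq v s <= dq v s'.
Proof.
  intros [Hs [Hlt | <-]]; [|lra].
  destruct (convex1_chord_slopes _ 0 s s' (convex2_line z v)) as [H _]; [lra|].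
  cbn beta in H. rewrite pmove_0, !Rminus_0_r in H. exact H.
Qed.

Lemma dq_add v1 v2 t : 0 < t -> dq (padd v1 v2) (t / 2) <= dq v1 t + dq v2 t.
Proof.
  intros Ht. unfold dq.
  pose proof (convex2_midpoint (pmove z v1 t) (pmove z v2 t)) as H.
  replace (pscal (1 / 2) (padd (pmove z v1 t) (pmove z v2 t)))
    with (pmove z (padd v1 v2) (t / 2)) in H by pt_field.
  replace ((g (pmove z v1 t) - g z) / t + (g (pmove z v2 t) - g z) / t)
    with ((g (pmove z v1 t) + g (pmove z v2 t) - 2 * g z) / t) by (field; lra).
  apply Rdiv_le_cross; nra.
Qed.

Lemma dq_lower v s : 0 < s <= 1 -> - dq (pscal (-1) v) 1 <= dq v s.
Proof.
  intros Hs.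
  pose proof (dq_add v (pscal (-1) v) s ltac:(lra)) as Hadd.
  replace (dq (padd v (pscal (-1) v)) (s / 2)) with 0 in Hadd
    by (unfold dq; replace (pmove z (padd v (pscal (-1) v)) (s / 2)) with z by pt_field;
        unfold Rdiv; ring).
  pose proof (dq_mono (pscal (-1) v) s 1 Hs). lra.
Qed.

Lemma dq_scal_pos v k t : 0 < k -> 0 < t -> dq (pscal k v) t = k * dq v (k * t).
Proof.
  intros Hk Ht. unfold dq.
  replace (pmove z (pscal k v) t) with (pmove z v (k * t)) by pt_field.
  field; lra.
Qed.

Lemma dq_scal_le v k t : 0 < t -> t * Rabs k <= 1 ->
  dq (pscal k v) t <= Rabs k * Rmax (dq v 1) (dq (pscal (-1) v) 1).
Proof.
  intros Ht Hk.
  destruct (Rtotal_order k 0) as [Hneg | [-> | Hpos]].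
  - rewrite Rabs_left in * by lra.
    replace (pscal k v) with (pscal (- k) (pscal (-1) v)) by pt_field.
    rewrite dq_scal_pos by lra.
    apply Rmult_le_compat_l; [lra|].
    apply Rle_trans with (dq (pscal (-1) v) 1); [apply dq_mono; nra | apply Rmax_r].
  - unfold dq. replace (pmove z (pscal 0 v) t) with z by pt_field.
    rewrite Rabs_R0. unfold Rdiv. lra.
  - rewrite Rabs_pos_eq in * by lra.
    rewrite dq_scal_pos by lra.
    apply Rmult_le_compat_l; [lra|].
    apply Rle_trans with (dq v 1); [apply dq_mono; nra | apply Rmax_l].
Qed.

Lemma d2_small_along_rays a v c : 0 < c ->
  exists s0 del, 0 < s0 /\ 0 < del /\
    forall k w s tau, w = padd a (pscal k v) -> Rabs k <= del -> 0 < tau < s -> s <= s0 ->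
      d2 g (pmove z w s) w tau < c * tau.
Proof.
  intros Hc.
  set (B := Rmax (dq v 1) (dq (pscal (-1) v) 1)).
  destruct (near_infimum_point (dq a) (- dq (pscal (-1) a) 1) (c / 8)) as [s1 [Hs1 Hinf]].
  { intros s Hs. apply dq_lower, Hs. }
  { lra. }
  set (del := Rmin 1 (c / (16 * (Rabs B + 1)))).
  pose proof (Rabs_pos B) as HB.
  assert (Hdel : 0 < del <= 1).
  { split; [apply Rmin_glb_lt; [lra | apply Rdiv_lt_0_compat; lra] | apply Rmin_l]. }
  assert (HdelB : Rabs B * del <= c / 16).
  { assert (H : del * (16 * (Rabs B + 1)) <= c) by (apply Rle_div_r; [lra | apply Rmin_r]).
    lra. }
  exists (s1 / 4), del. split; [lra|]. split; [lra|].
  intros k w s tau Hw Hk Htau Hs.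
  apply Rnot_le_lt. intros Hkink.
  assert (Hjump : c / 2 <= dq w (2 * s) - dq w s).
  { unfold d2 in Hkink. rewrite !pmove_pmove in Hkink.
    replace (s + - tau) with (s - tau) in Hkink by ring.
    pose proof (convex1_slope_jump _ c s tau (convex2_line z w) Htau Hkink) as H.
    cbn beta in H. rewrite pmove_0 in H. exact H. }
  assert (HkB : Rabs k * B <= c / 16).
  { apply Rle_trans with (Rabs k * Rabs B).
    - apply Rmult_le_compat_l; [apply Rabs_pos | apply Rle_abs].
    - pose proof (Rabs_pos k). nra. }
  (* w = a + k v is compared with a by sublinearity of dq in the direction, at cost |k| B. *)
  assert (Hup : dq w (2 * s) <= dq a (4 * s) + Rabs k * B).
  { pose proof (dq_add a (pscal k v) (4 * s) ltac:(lra)) as H.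
    rewrite <- Hw in H. replace (4 * s / 2) with (2 * s) in H by field.
    pose proof (dq_scal_le v k (4 * s) ltac:(lra) ltac:(pose proof (Rabs_pos k); nra)) as Hv.
    fold B in Hv. lra. }
  assert (Hlow : dq a (s / 2) <= dq w s + Rabs k * B).
  { pose proof (dq_add w (pscal (- k) v) s ltac:(lra)) as H.
    replace (padd w (pscal (- k) v)) with a in H by (subst w; pt_field).
    pose proof (dq_scal_le v (- k) s ltac:(lra)
                  ltac:(rewrite Rabs_Ropp; pose proof (Rabs_pos k); nra)) as Hv.
    rewrite Rabs_Ropp in Hv. fold B in Hv. lra. }
  assert (Hsettle : dq a (4 * s) <= dq a (s / 2) + c / 8).
  { apply Rle_trans with (dq a s1); [apply dq_mono; lra | apply Hinf; lra]. }
  lra.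
Qed.

Lemma d2_small_near_center l c : 0 < c ->
  exists s0 del, 0 < s0 /\ 0 < del /\
    forall m x tau, Rabs (m - l) <= del -> 0 < tau < Rabs x -> Rabs x <= s0 ->
      d2 g (pmove z (1, m) x) (1, m) tau < c * tau.
Proof.
  intros Hc.
  destruct (d2_small_along_rays (1, l) (0, 1) c Hc) as [s1 [del1 [Hs1 [Hdel1 Hfwd]]]].
  destruct (d2_small_along_rays (-1, - l) (0, 1) c Hc) as [s2 [del2 [Hs2 [Hdel2 Hbwd]]]].
  exists (Rmin s1 s2), (Rmin del1 del2).
  split; [apply Rmin_glb_lt; lra|]. split; [apply Rmin_glb_lt; lra|].
  intros m x tau Hm Htau Hx.
  pose proof (Rmin_l s1 s2). pose proof (Rmin_r s1 s2).
  pose proof (Rmin_l del1 del2). pose proof (Rmin_r del1 del2).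
  destruct (Rle_or_lt 0 x) as [Hpos | Hneg].
  - rewrite Rabs_pos_eq in Htau, Hx by exact Hpos.
    apply (Hfwd (m - l)); [pt_field | lra | exact Htau | lra].
  - rewrite Rabs_left in Htau, Hx by exact Hneg.
    rewrite <- d2_opp.
    replace (pmove z (1, m) x) with (pmove z (pscal (-1) (1, m)) (- x)) by pt_field.
    apply (Hbwd (- (m - l))); [pt_field | rewrite Rabs_Ropp; lra | exact Htau | lra].
Qed.

End ConvexPlane.

Lemma edist_nonneg p q : 0 <= edist p q.
Proof. apply sqrt_pos. Qed.

Lemma edist_fst_le p q : Rabs (fst p - fst q) <= edist p q.
Proof.
  unfold edist. rewrite <- (sqrt_pow2 (Rabs _)) by apply Rabs_pos.
  apply sqrt_le_1_alt. rewrite pow2_abs.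
  pose proof (pow2_ge_0 (snd p - snd q)). lra.
Qed.

Lemma edist_snd_le p q : Rabs (snd p - snd q) <= edist p q.
Proof.
  unfold edist. rewrite <- (sqrt_pow2 (Rabs _)) by apply Rabs_pos.
  apply sqrt_le_1_alt. rewrite pow2_abs.
  pose proof (pow2_ge_0 (fst p - fst q)). lra.
Qed.

Lemma edist_pmove p w t b : edist (pmove p w t) b = edist (pscal t w) (psub b p).
Proof. unfold edist, pmove, padd, psub, pscal; cbn [fst snd]. f_equal. ring. Qed.

Lemma edist_pmove_opp p w t b : edist (pmove p w (- t)) b = edist (pscal t w) (psub p b).
Proof. unfold edist, pmove, padd, psub, pscal; cbn [fst snd]. f_equal. ring. Qed.

Lemma cone_gap u rho tau m d : 0 < u -> Rabs m <= u -> 0 < tau -> tau <= rho / 2 ->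
  (Aset (3 * u) rho d -> d = (0, 0)) ->
  Rmin (1 / 2) (u / 2) * tau <= edist (pscal tau (1, m)) d.
Proof.
  intros Hu Hm Htau Hrho Hcone.
  assert (Hc : Rmin (1 / 2) (u / 2) * tau <= tau / 2 /\ Rmin (1 / 2) (u / 2) * tau <= u * tau / 2).
  { pose proof (Rmin_l (1 / 2) (u / 2)). pose proof (Rmin_r (1 / 2) (u / 2)). split; nra. }
  pose proof (edist_fst_le (pscal tau (1, m)) d) as Hx.
  pose proof (edist_snd_le (pscal tau (1, m)) d) as Hy.
  destruct d as [X Y]. unfold pscal in *. cbn [fst snd] in *.
  destruct (Rle_or_lt (tau / 2) (Rabs (tau * 1 - X))) as [Hfar | Hnear]; [lra|].
  apply Rabs_def2 in Hnear.
  assert (HY : 3 * u * X < Rabs Y).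
  { apply Rnot_le_lt. intros HA.
    assert (Hd : (X, Y) = (0, 0)) by (apply Hcone; unfold Aset; cbn [fst snd]; split; lra).
    injection Hd. lra. }
  assert (Hmt : Rabs (tau * m) <= u * tau) by (rewrite Rabs_mult, Rabs_pos_eq; nra).
  pose proof (Rabs_triang_inv Y (tau * m)) as Htri.
  rewrite <- (Rabs_Ropp (Y - tau * m)) in Htri. replace (- (Y - tau * m)) with (tau * m - Y) in Htri by ring.
  nra.
Qed.

Section DistanceFunction.

Variable M : pt -> Prop.

Lemma distfun_is_inf x a0 : M a0 ->
  (forall a, M a -> distfun M x <= edist x a) /\
  (forall b, (forall a, M a -> b <= edist x a) -> b <= distfun M x).
Proof.
  intros Ha0. unfold distfun.
  set (E := fun r => exists a, M a /\ r = edist x a).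
  destruct (Glb_Rbar_correct E) as [Hlb Hglb].
  assert (H0 : is_lb_Rbar E (Finite 0)) by (intros r [a [_ ->]]; apply edist_nonneg).
  destruct (Glb_Rbar E) as [l | | ] eqn:El.
  - split.
    + intros a Ha. apply (Hlb (edist x a)). exists a; auto.
    + intros b Hb. apply (Hglb (Finite b)). intros r [a [Ha ->]]. apply Hb, Ha.
  - exact (False_ind _ (Hlb (edist x a0) (ex_intro _ a0 (conj Ha0 eq_refl)))).
  - exact (False_ind _ (Hglb _ H0)).
Qed.

Lemma distfun_nonneg x a0 : M a0 -> 0 <= distfun M x.
Proof. intros Ha0. apply (distfun_is_inf x a0 Ha0). intros a _. apply edist_nonneg. Qed.

Lemma distfun_of_mem x : M x -> distfun M x = 0.
Proof.
  intros Hx. apply Rle_antisym; [|exact (distfun_nonneg x x Hx)].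
  replace 0 with (edist x x)
    by (unfold edist; rewrite <- sqrt_0; f_equal; ring).
  exact (proj1 (distfun_is_inf x x Hx) x Hx).
Qed.

Lemma distfun_kink u rho tau m p : M p -> 0 < u -> Rabs m <= u -> 0 < tau -> tau <= rho / 2 ->
  (forall b, (Aset (3 * u) rho (psub b p) /\ M b) <-> b = p) \/
  (forall b, (Aset (3 * u) rho (psub p b) /\ M b) <-> b = p) ->
  Rmin (1 / 2) (u / 2) * tau <= d2 (distfun M) p (1, m) tau.
Proof.
  intros Hp Hu Hm Htau Hrho Hcone.
  unfold d2. rewrite (distfun_of_mem p Hp).
  pose proof (distfun_nonneg (pmove p (1, m) tau) p Hp).
  pose proof (distfun_nonneg (pmove p (1, m) (- tau)) p Hp).
  destruct Hcone as [Hfwd | Hbwd].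
  - enough (Rmin (1 / 2) (u / 2) * tau <= distfun M (pmove p (1, m) tau)) by lra.
    apply (distfun_is_inf _ p Hp). intros b Hb.
    rewrite edist_pmove. apply (cone_gap u rho); auto.
    intros HA. rewrite (proj1 (Hfwd b) (conj HA Hb)). pt_field.
  - enough (Rmin (1 / 2) (u / 2) * tau <= distfun M (pmove p (1, m) (- tau))) by lra.
    apply (distfun_is_inf _ p Hp). intros b Hb.
    rewrite edist_pmove_opp. apply (cone_gap u rho); auto.
    intros HA. rewrite (proj1 (Hbwd b) (conj HA Hb)). pt_field.
Qed.

End DistanceFunction.

Lemma d2_dc_le f g h p v t : convex2 h -> (forall x, f x = g x - h x) ->
  d2 f p v t <= d2 g p v t.
Proof.
  intros Hh Hf. pose proof (d2_nonneg h Hh p v t) as H.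
  unfold d2 in *. rewrite !Hf. lra.
Qed.

Definition cone_slope (z p : pt) : R := (snd p - snd z) / (fst p - fst z).

Lemma cone_slope_spec u z p : Sset u (psub p z) -> p <> z ->
  fst p - fst z <> 0 /\ Rabs (cone_slope z p) <= u /\
  p = pmove z (1, cone_slope z p) (fst p - fst z).
Proof.
  unfold Sset, psub, cone_slope. cbn [fst snd]. intros HS Hne.
  assert (HX : fst p - fst z <> 0).
  { intros HX. apply Hne. rewrite HX, Rabs_R0, Rmult_0_r in HS.
    pose proof (Rabs_pos (snd p - snd z)).
    assert (HY : snd p - snd z = 0) by (apply Rabs_eq_0; lra).
    apply injective_projections; lra. }
  split; [exact HX|]. split.
  - rewrite Rabs_div by exact HX. apply Rle_div_l; [apply Rabs_pos_lt, HX | lra].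
  - unfold pmove, padd, pscal. apply injective_projections; cbn [fst snd]; field; exact HX.
Qed.

Lemma filterlim_fst_close (zs : nat -> pt) z :
  filterlim zs eventually (@locally (prod_UniformSpace R_UniformSpace R_UniformSpace) z) ->
  forall eps, 0 < eps -> exists N, forall n, (N <= n)%nat -> Rabs (fst (zs n) - fst z) < eps.
Proof.
  intros Hlim eps Heps.
  destruct (Hlim _ (locally_ball z (mkposreal eps Heps))) as [N HN].
  exists N. intros n Hn. exact (proj1 (HN n Hn)).
Qed.

Lemma bounded_cluster_point (m : nat -> R) u : (forall n, Rabs (m n) <= u) ->
  exists l, forall del, 0 < del -> forall N, exists n, (N <= n)%nat /\ Rabs (m n - l) < del.
Proof.
  intros Hm.
  destruct (Bolzano_Weierstrass m _ (compact_P3 (- u) u)) as [l Hl].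
  { intros n. apply Rabs_le_between, Hm. }
  exists l. intros del Hdel N.
  apply (Hl (disc l (mkposreal del Hdel)) N).
  exists (mkposreal del Hdel). intros y Hy. exact Hy.
Qed.

Theorem lemma4p3 (M : pt -> Prop) (z : pt) (u : R)
  (HM : closed2 M) (Hz : M z) (Hu : 0 < u)
  (zs : nat -> pt) (rho : nat -> R)
  (HzsM : forall n, M (zs n))
  (Hrho : forall n, 0 < rho n)
  (Hlim : filterlim zs eventually (@locally (prod_UniformSpace R_UniformSpace R_UniformSpace) z))
  (Hcone : forall n, Sset u (psub (zs n) z) /\ zs n <> z)
  (Hempty : forall n,
     (forall p, (Aset (3 * u) (rho n) (psub p (zs n)) /\ M p) <-> p = zs n) \/
     (forall p, (Aset (3 * u) (rho n) (psub (zs n) p) /\ M p) <-> p = zs n)) :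
  ~ in_D2 M.
Proof.
  intros [Hnone | [_ [_ [g [h [Hg [Hh Hgh]]]]]]]; [exact (Hnone z Hz) |].
  pose proof (fun n => cone_slope_spec u z (zs n) (proj1 (Hcone n)) (proj2 (Hcone n))) as Hzs.
  destruct (bounded_cluster_point (fun n => cone_slope z (zs n)) u (fun n => proj1 (proj2 (Hzs n))))
    as [l Hl].
  set (c := Rmin (1 / 2) (u / 2)).
  assert (Hc : 0 < c) by (apply Rmin_glb_lt; lra).
  destruct (d2_small_near_center g Hg z l c Hc) as [s0 [del [Hs0 [Hdel Hsmall]]]].
  destruct (filterlim_fst_close zs z Hlim s0 Hs0) as [N HN].
  destruct (Hl del Hdel N) as [n [Hn Hmn]].
  specialize (HN n Hn).
  destruct (Hzs n) as [Hx [Hm Hzn]].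
  set (x := fst (zs n) - fst z) in *. set (m := cone_slope z (zs n)) in *.
  pose proof (Rabs_pos_lt x Hx). pose proof (Hrho n).
  set (tau := Rmin (Rabs x) (rho n / 2) / 2).
  assert (Htau : 0 < tau < Rabs x /\ tau <= rho n / 2).
  { pose proof (Rmin_l (Rabs x) (rho n / 2)). pose proof (Rmin_r (Rabs x) (rho n / 2)).
    assert (0 < Rmin (Rabs x) (rho n / 2)) by (apply Rmin_glb_lt; lra).
    unfold tau. lra. }
  assert (Hkink : c * tau <= d2 g (zs n) (1, m) tau).
  { eapply Rle_trans; [ | apply (d2_dc_le _ g h _ _ _ Hh Hgh)].
    apply (distfun_kink M u (rho n)); try apply Htau; auto. }
  rewrite Hzn in Hkink.
  apply (Rlt_not_le _ _ (Hsmall m x tau ltac:(lra) (proj1 Htau) (Rlt_le _ _ HN))).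
  exact Hkink.
Qed.
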